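(* Let $(X,\phi)$ be a uniformly Lipschitz flow on a metric space $(X,d)$. Then for every non-empty subset $Z\subset X$, $$\overline{\mathrm{mdim}}^B(\phi,Z,d)=\overline{\mathrm{mdim}}^B(\phi_1,Z,d).$$
   Context: A flow: $\phi:X\times\mathbb{R}\to X$ continuous, $\phi_t(x)=\phi(x,t)$, $\phi_0=\mathrm{id}$, $\phi_{t+s}=\phi_t\circ\phi_s$. Uniformly Lipschitz: for every $t_0>0$ there is $L(t_0)>0$ such that for all $\epsilon>0$ and $x,y\in X$, $d(x,y)\le\epsilon/L(t_0)$ implies $d(\phi_sx,\phi_sy)<\epsilon$ for all $s\in[0,t_0]$. Balls: $B_n(x,\epsilon,\phi)=\{y:d(\phi_sx,\phi_sy)<\epsilon\ \forall s\in[0,n]\}$ and $B_n(x,\epsilon,\phi_1)=\{y:d(\phi_jx,\phi_jy)<\epsilon,\ j=0,\dots,n-1\}$. Bowen upper metric mean dimension: for $\lambda\in\mathbb{R}$, $N\in\mathbb{N}$, $\epsilon>0$, $M(\phi,d,Z,\lambda,N,\epsilon)=\inf\sum_{i\in I}e^{-n_i\lambda}$ over finite or countable families $\{B_{n_i}(x_i,\epsilon,\phi)\}_{i\in I}$ covering $Z$ with integers $n_i\ge N$; $M(\phi,d,Z,\lambda,\epsilon)=\lim_{N\to\infty}M(\phi,d,Z,\lambda,N,\epsilon)$; $M(\phi,d,Z,\epsilon)=\inf\{\lambda:M(\phi,d,Z,\lambda,\epsilon)=0\}$; $\overline{\mathrm{mdim}}^B(\phi,Z,d)=\limsup_{\epsilon\to0}\frac{M(\phi,d,Z,\epsilon)}{\log(1/\epsilon)}$.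 The quantity $\overline{\mathrm{mdim}}^B(\phi_1,Z,d)$ is defined identically with $B_{n_i}(x_i,\epsilon,\phi)$ replaced by $B_{n_i}(x_i,\epsilon,\phi_1)$. *)

From HB Require Import structures.
From mathcomp Require Import all_boot all_order all_algebra.
From mathcomp Require Import all_classical all_reals all_analysis.
Set Implicit Arguments. Unset Strict Implicit. Unset Printing Implicit Defensive.
Import Order.TTheory GRing.Theory Num.Theory.
Local Open Scope classical_set_scope.
Local Open Scope ring_scope.

Section Defs.
Variable R : realType.
Variable X : Type.

Definition is_metric (d : X -> X -> R) : Prop :=
  [/\ (forall x y, 0 <= d x y),
      (forall x y, d x y = 0 <-> x = y),
      (forall x y, d x y = d y x) &
      (forall x y z, d x z <= d x y + d y z)].

Definition is_flow (d : X -> X -> R) (phi : X -> R -> X) : Prop :=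
  [/\ (forall x t (eps : R), 0 < eps -> exists2 delta : R, 0 < delta &
         forall y s, d x y < delta -> `|t - s| < delta ->
                     d (phi x t) (phi y s) < eps),
      (forall x, phi x 0 = x) &
      (forall x t s, phi x (t + s) = phi (phi x s) t)].

Definition uniformly_lipschitz (d : X -> X -> R) (phi : X -> R -> X) : Prop :=
  forall t0 : R, 0 < t0 -> exists2 L : R, 0 < L &
    forall (eps : R) (x y : X), 0 < eps -> d x y <= eps / L ->
      forall s : R, 0 <= s <= t0 -> d (phi x s) (phi y s) < eps.

Definition bowen_ball_flow (d : X -> X -> R) (phi : X -> R -> X)
    (n : nat) (x : X) (eps : R) : set X :=
  [set y | forall s : R, 0 <= s <= n%:R -> d (phi x s) (phi y s) < eps].

Definition bowen_ball_map (d : X -> X -> R) (phi : X -> R -> X)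
    (n : nat) (x : X) (eps : R) : set X :=
  [set y | forall j : nat, (j < n)%N ->
     d (iter j (phi^~ 1) x) (iter j (phi^~ 1) y) < eps].

(* A generic "ball system" B n x eps; the two quantities differ only by it. *)
Variable B : nat -> X -> R -> set X.

(* M(Z, lambda, N, eps): infimum over finite or countable families
   {B_{n_i}(x_i,eps)}_{i in I} (I a subset of nat) covering Z with n_i >= N *)
Definition M_N (Z : set X) (lambda : R) (N : nat) (eps : R) : \bar R :=
  ereal_inf [set v : \bar R | exists (I : set nat) (n : nat -> nat) (x : nat -> X),
      [/\ (forall i, I i -> (N <= n i)%N),
          Z `<=` \bigcup_(i in I) B (n i) (x i) eps &
          v = (\esum_(i in I) (expR (- ((n i)%:R * lambda)))%:E)%E]].

Definition M_lim (Z : set X) (lambda eps : R) : \bar R :=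
  limn (fun N => M_N Z lambda N eps).

Definition M_crit (Z : set X) (eps : R) : \bar R :=
  ereal_inf [set lambda%:E | lambda in [set lambda | M_lim Z lambda eps = 0%E]].

Definition upper_mdim (Z : set X) : \bar R :=
  ereal_inf [set ereal_sup [set (M_crit Z eps * ((ln (1 / eps))^-1)%:E)%E
                           | eps in [set eps : R | 0 < eps < delta]]
            | delta in [set delta : R | 0 < delta]].

End Defs.

Definition mdimB_flow (R : realType) (X : Type) (d : X -> X -> R)
  (phi : X -> R -> X) (Z : set X) : \bar R :=
  upper_mdim (bowen_ball_flow d phi) Z.

Definition mdimB_map (R : realType) (X : Type) (d : X -> X -> R)
  (phi : X -> R -> X) (Z : set X) : \bar R :=
  upper_mdim (bowen_ball_map d phi) Z.

From mathcomp Require Import all_boot all_order all_algebra.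
From mathcomp Require Import all_classical all_reals all_analysis.
From mathcomp Require Import ring lra zify.
Import Order.TTheory GRing.Theory Num.Theory.
Local Open Scope classical_set_scope.
Local Open Scope ring_scope.

(* Every flow Bowen ball B_n(x,e,phi) lies in the time-one ball B_n(x,e,phi_1), and the
   Lipschitz bound on [0,1] gives B_(n+1)(x,e/L,phi_1) inside B_n(x,e,phi).  Shifting the
   lengths of a cover by one only multiplies its weight by exp(lambda), so the critical
   values satisfy M(phi_1,Z,e) <= M(phi,Z,e) <= M(phi_1,Z,e/L).  Since
   log(L/e)/log(1/e) -> 1 as e -> 0, rescaling e by the constant L does not change the
   limsup of M(.,Z,e)/log(1/e). *)

Lemma esumZl_le {R : realType} {T : choiceType} (S : set T) (c : R)
    (F : T -> \bar R) :
  0 <= c -> (forall i, (0 <= F i)%E) ->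
  (\esum_(i in S) (c%:E * F i) <= c%:E * \esum_(i in S) F i)%E.
Proof.
move=> c_ge0 F_ge0; apply: ge_ereal_sup => _ [A [finA AS] <-].
rewrite -ge0_mule_fsumr //; apply: lee_wpmul2l; first by rewrite lee_fin.
by apply: ereal_sup_ubound; exists A.
Qed.

Lemma lee_real_ubounds {R : realType} (x y : \bar R) :
  (forall s : R, (y <= s%:E)%E -> forall e, 0 < e -> (x <= (s + e)%:E)%E) ->
  (x <= y)%E.
Proof.
case: y => [r | | ] ub.
- by apply/lee_addgt0Pr => e; rewrite -EFinD; exact: ub.
- exact: leey.
- rewrite (@eq_ninfty _ x) // => r; rewrite -(subrK 1 r).
  exact: ub (leNye _) _ ltr01.
Qed.

Section BowenCriticalValue.
Context {R : realType} {X : Type}.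
Implicit Types (B : nat -> X -> R -> set X) (Z : set X).

Lemma M_N_ge0 B Z lam N eps : (0 <= M_N B Z lam N eps)%E.
Proof.
apply/ereal_infP => _ [I [n [x [_ _ ->]]]]; apply: esum_ge0 => i _.
by rewrite lee_fin expR_ge0.
Qed.

Lemma M_N_nondecreasing B Z lam eps :
  nondecreasing_seq (fun N => M_N B Z lam N eps).
Proof.
move=> N N' NN'; apply/ereal_infP => _ [I [n [x [n_ge cover ->]]]].
apply: ereal_inf_lbound; exists I, n, x; split => // i Ii.
exact: leq_trans NN' (n_ge i Ii).
Qed.

Lemma M_limE B Z lam eps :
  M_lim B Z lam eps = ereal_sup (range (fun N => M_N B Z lam N eps)).
Proof. exact/cvg_lim/ereal_nondecreasing_cvgn/M_N_nondecreasing. Qed.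

Lemma M_N_le_lim B Z lam N eps : (M_N B Z lam N eps <= M_lim B Z lam eps)%E.
Proof. by rewrite M_limE; apply: ereal_sup_ubound; exists N. Qed.

Lemma M_N_shift B1 B2 Z lam N k eps1 eps2 :
  (forall n x, B1 (n + k)%N x eps1 `<=` B2 n x eps2) ->
  ((expR (- (k%:R * lam)))%:E * M_N B2 Z lam N eps2
     <= M_N B1 Z lam (N + k) eps1)%E.
Proof.
move=> sub; apply/ereal_infP => _ [I [n [x [n_ge cover ->]]]].
have nK i : I i -> (n i - k + k)%N = n i by move=> /n_ge; lia.
set F := fun i => (expR (- ((n i)%:R * lam)))%:E.
have le_sum : (M_N B2 Z lam N eps2 <=
               \esum_(i in I) ((expR (k%:R * lam))%:E * F i))%E.
  apply: ereal_inf_lbound; exists I, (fun i => n i - k)%N, x; split.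
  - by move=> i /n_ge; lia.
  - apply: subset_trans cover _ => z [i Ii Bz]; exists i => //.
    by apply: sub; rewrite nK.
  - apply: eq_esum => i Ii; rewrite -EFinM -expRD; congr (EFin (expR _)).
    by rewrite natrB; [ring | move: (n_ge i Ii); lia].
have F_ge0 i : (0 <= F i)%E by rewrite lee_fin expR_ge0.
have {}le_sum := le_trans le_sum (esumZl_le _ _ _ (expR_ge0 _) F_ge0).
apply: le_trans (lee_wpmul2l _ le_sum) _; first by rewrite lee_fin expR_ge0.
by rewrite muleA -EFinM -expRD addNr expR0 mul1e.
Qed.

Lemma M_lim_eq0_shift B1 B2 Z lam k eps1 eps2 :
  (forall n x, B1 (n + k)%N x eps1 `<=` B2 n x eps2) ->
  M_lim B1 Z lam eps1 = 0%E -> M_lim B2 Z lam eps2 = 0%E.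
Proof.
move=> sub lim1_0; apply/eqP; rewrite eq_le; apply/andP; split; last first.
  exact: le_trans (M_N_ge0 B2 Z lam 0 eps2) (M_N_le_lim _ _ _ _ _).
rewrite M_limE; apply: ge_ereal_sup => _ [N _ <-].
have c_gt0 : (0 < (expR (- (k%:R * lam)))%:E)%E by rewrite lte_fin expR_gt0.
rewrite -(pmule_rle0 _ c_gt0) -lim1_0.
apply: le_trans (M_N_le_lim B1 Z lam (N + k) eps1); exact: M_N_shift.
Qed.

Lemma M_crit_le_shift B1 B2 Z k eps1 eps2 :
  (forall n x, B1 (n + k)%N x eps1 `<=` B2 n x eps2) ->
  (M_crit B2 Z eps2 <= M_crit B1 Z eps1)%E.
Proof.
move=> sub; apply: ereal_inf_le_tmp => _ [lam lim1_0 <-]; exists lam => //.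
exact: M_lim_eq0_shift lim1_0.
Qed.

End BowenCriticalValue.

Section LogRatioLimsup.
Context {R : realType}.
Implicit Types (f g h : R -> \bar R) (L delta eps s e l : R).

Definition log_ratio_sup h delta : \bar R :=
  ereal_sup [set (h eps * ((ln (1 / eps))^-1)%:E)%E
            | eps in [set eps : R | 0 < eps < delta]].

Definition log_ratio_limsup h : \bar R :=
  ereal_inf [set log_ratio_sup h delta | delta in [set delta : R | 0 < delta]].

Lemma ln_inv_div eps L : 0 < eps -> 0 < L ->
  ln (1 / (eps / L)) = ln L + ln (1 / eps).
Proof.
move=> eps_gt0 L_gt0.
by rewrite -lnM ?posrE ?divr_gt0 // !div1r invf_div mulrC.
Qed.

Lemma scaled_log_ratio_le s e L l : 1 <= L -> 0 < e -> 0 < l ->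
  `|s| * ln L / e <= l -> s * ((ln L + l) / l) <= s + e.
Proof.
move=> L_ge1 e_gt0 l_gt0; rewrite ler_pdivrMr // => le_l.
have lnL_ge0 : 0 <= ln L by rewrite ln_ge0.
have s_lnL : s * ln L <= `|s| * ln L by rewrite ler_wpM2r // ler_norm.
rewrite mulrDl divff ?gt_eqF // mulrDr mulr1 addrC lerD2l mulrA.
by rewrite ler_pdivrMr //; lra.
Qed.

Lemma log_ratio_limsup_le_scale_bound f g L delta s e :
  1 <= L -> 0 < delta -> 0 < e ->
  (forall eps, 0 < eps < 1 -> (f eps <= g (eps / L)%R)%E) ->
  (log_ratio_sup g delta <= s%:E)%E -> (log_ratio_limsup f <= (s + e)%:E)%E.
Proof.
move=> L_ge1 delta_gt0 e_gt0 fg g_le_s.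
have L_gt0 : 0 < L := lt_le_trans ltr01 L_ge1.
pose K := `|s| * ln L / e.
pose delta' := Num.min (Num.min delta 1) (expR (- K)).
apply: ge_ereal_inf; exists (log_ratio_sup f delta').
  by exists delta' => //; rewrite /= /delta' !lt_min delta_gt0 ltr01 expR_gt0.
apply: ge_ereal_sup => _ [eps /andP[eps_gt0 +] <-]; rewrite !lt_min.
move=> /andP[/andP[eps_lt_delta eps_lt1] eps_lt_K].
set l := ln (1 / eps).
have l_gt0 : 0 < l by apply: ln_gt0; rewrite div1r invf_gt1.
have K_le_l : K <= l.
  rewrite /l div1r lnV ?posrE // lerNr -(expRK (- K)).
  by rewrite ler_ln ?posrE ?expR_gt0 // ltW.
have epsL_gt0 : 0 < eps / L by rewrite divr_gt0.
have g_epsL : (g (eps / L)%R * ((ln L + l)^-1)%:E <= s%:E)%E.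
  apply: le_trans g_le_s; rewrite -ln_inv_div //.
  apply: ereal_sup_ubound; exists (eps / L) => //; rewrite /= epsL_gt0 /=.
  by rewrite (le_lt_trans _ eps_lt_delta) // ler_pdivrMr // ler_peMr // ltW.
have lnLl_gt0 : 0 < ln L + l by rewrite ltr_wpDl // ln_ge0.
apply: le_trans (_ : (g (eps / L)%R * (l^-1)%:E <= _)%E).
  by apply: lee_wpmul2r; [rewrite lee_fin invr_ge0 ltW | apply: fg; rewrite eps_gt0].
have -> : (g (eps / L)%R * (l^-1)%:E =
           g (eps / L)%R * ((ln L + l)^-1)%:E * ((ln L + l) / l)%:E)%E.
  by rewrite -muleA -EFinM mulrA mulVf ?gt_eqF // mul1r.
apply: le_trans (lee_wpmul2r _ g_epsL) _; first by rewrite lee_fin ltW ?divr_gt0.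
by rewrite -EFinM lee_fin scaled_log_ratio_le.
Qed.

Lemma log_ratio_limsup_le_scale f g L : 1 <= L ->
  (forall eps, 0 < eps < 1 -> (f eps <= g (eps / L)%R)%E) ->
  (log_ratio_limsup f <= log_ratio_limsup g)%E.
Proof.
move=> L_ge1 fg; apply/ereal_infP => _ [delta delta_gt0 <-].
apply: lee_real_ubounds => s g_le_s e e_gt0.
exact: log_ratio_limsup_le_scale_bound L_ge1 delta_gt0 e_gt0 fg g_le_s.
Qed.

End LogRatioLimsup.

Lemma upper_mdimE (R : realType) (X : Type) (B : nat -> X -> R -> set X) Z :
  upper_mdim B Z = log_ratio_limsup (M_crit B Z).
Proof. by []. Qed.

Section FlowBowenBalls.
Context {R : realType} {X : Type} {d : X -> X -> R} {phi : X -> R -> X}.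
Hypothesis phi0 : forall x, phi x 0 = x.
Hypothesis phiD : forall x t s, phi x (t + s) = phi (phi x s) t.

Lemma iter_time_one j x : iter j (phi^~ 1) x = phi x j%:R.
Proof. by elim: j => [|j IHj] /=; rewrite ?phi0 // IHj -phiD mulrS. Qed.

Lemma bowen_ball_flow_sub_map n x eps :
  bowen_ball_flow d phi n x eps `<=` bowen_ball_map d phi n x eps.
Proof.
move=> y y_ball j j_lt_n; rewrite !iter_time_one; apply: y_ball.
by rewrite ler0n ler_nat ltnW.
Qed.

Lemma bowen_ball_map_sub_flow L n x eps : 0 < eps ->
  (forall x y, d x y <= eps / L ->
     forall s, 0 <= s <= 1 -> d (phi x s) (phi y s) < eps) ->
  bowen_ball_map d phi n.+1 x (eps / L) `<=` bowen_ball_flow d phi n x eps.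
Proof.
move=> eps_gt0 lip y y_ball s /andP[s_ge0 s_le_n].
have /andP[j_le_s s_lt_j1] := truncn_itv s_ge0.
set j := Num.truncn s in j_le_s s_lt_j1.
have j_lt_n1 : (j < n.+1)%N.
  by rewrite ltnS truncn_le_nat (le_lt_trans s_le_n) // ltr_nat.
have shift z : phi z s = phi (iter j (phi^~ 1) z) (s - j%:R).
  by rewrite iter_time_one -phiD subrK.
rewrite !shift; apply: lip; first exact: ltW (y_ball j j_lt_n1).
by rewrite subr_ge0 j_le_s lerBlDr -mulrS ltW.
Qed.

End FlowBowenBalls.

Lemma uniformly_lipschitz_unit_time (R : realType) (X : Type) (d : X -> X -> R)
    (phi : X -> R -> X) :
  uniformly_lipschitz d phi ->
  exists2 L : R, 1 <= L & forall eps, 0 < eps ->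
    forall x y, d x y <= eps / L ->
    forall s, 0 <= s <= 1 -> d (phi x s) (phi y s) < eps.
Proof.
move=> /(_ 1 ltr01) [L L_gt0 lip].
have L_le_max : L <= Num.max L 1 by rewrite le_max lexx.
have max_ge1 : 1 <= Num.max L 1 by rewrite le_max lexx orbT.
exists (Num.max L 1) => // eps eps_gt0 x y dxy; apply: lip => //.
apply: le_trans dxy _; rewrite ler_pM2l // lef_pV2 ?posrE //.
exact: lt_le_trans ltr01 max_ge1.
Qed.

Theorem proposition2p11 (R : realType) (X : Type) (d : X -> X -> R)
  (phi : X -> R -> X) :
  is_metric d -> is_flow d phi -> uniformly_lipschitz d phi ->
  forall Z : set X, Z !=set0 ->
  mdimB_flow d phi Z = mdimB_map d phi Z.
Proof.
move=> _ [_ phi0 phiD] /uniformly_lipschitz_unit_time [L L_ge1 lip] Z _.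
rewrite /mdimB_flow /mdimB_map !upper_mdimE; apply/le_anti/andP; split.
- apply: (log_ratio_limsup_le_scale _ _ _ L_ge1) => eps /andP[eps_gt0 _].
  apply: (M_crit_le_shift _ _ _ 1%N) => n x; rewrite addn1.
  by apply: bowen_ball_map_sub_flow => //; exact: lip.
- apply: (log_ratio_limsup_le_scale _ _ _ (lexx 1)) => eps _; rewrite divr1.
  apply: (M_crit_le_shift _ _ _ 0%N) => n x; rewrite addn0.
  exact: bowen_ball_flow_sub_map.
Qed.
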